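(* Let $k\ge0$ be an integer and let $G$ be a threshold graph such that $\mathrm{seq}(G)$ contains at least $k$ ones. Then a vertex $v\in V(G)$ lies in the $k$-core of $G$ if and only if $\deg_G(v)\ge k$.
   Context: A threshold graph on $n\ge1$ vertices is built from a base vertex $v_0$ by successively adding $v_1,\dots,v_{n-1}$, each either isolated (adjacent to no earlier vertex) or dominating (adjacent to all earlier vertices); its creation sequence $\mathrm{seq}(G)=s_1\cdots s_{n-1}$ has $s_i=1$ if $v_i$ is dominating and $s_i=0$ otherwise. The $k$-core of a graph is its maximum induced subgraph in which every vertex has degree at least $k$ (obtained by iteratively deleting vertices of degree less than $k$); it may be empty. *)

From mathcomp Require Import all_boot.
Set Implicit Arguments. Unset Strict Implicit. Unset Printing Implicit Defensive.

(* A simple graph is a relation [e : rel T] on a finite type [T]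
   (symmetric and irreflexive in our uses). *)

Definition deg (T : finType) (e : rel T) (v : T) : nat := #|[set u | e v u]|.

Definition min_deg_ge (T : finType) (e : rel T) (k : nat) (S : {set T}) : bool :=
  [forall v in S, k <= #|[set u in S | e v u]|].

(* The k-core: the maximum induced subgraph with minimum degree >= k,
   i.e. the union of all vertex sets S with min_deg_ge e k S (this union
   itself satisfies the property, hence is the maximum one; possibly empty). *)
Definition kcore (T : finType) (e : rel T) (k : nat) : {set T} :=
  \bigcup_(S | min_deg_ge e k S) S.

(* Threshold graph on vertices v_0, ..., v_n (type 'I_n.+1) with creation
   sequence s = s_1 ... s_n (s_i = nth false s (i-1)): for i < j, v_i ~ v_j
   iff v_j is dominating, i.e. s_j = true. *)
Definition threshold_adj (n : nat) (s : seq bool) : rel 'I_n.+1 :=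
  fun i j => (i != j) && nth false s (maxn i j).-1.

From mathcomp Require Import all_boot.

(* The base vertex v_0 together with the dominating vertices forms a clique of
   size count id s + 1 > k, and every other vertex has all its neighbours in
   that clique.  Hence the clique consists of vertices of degree >= k, and the
   set of all vertices of degree >= k already has minimum degree >= k as an
   induced subgraph: it is the k-core. *)

Section KCore.
Variables (T : finType) (e : rel T) (k : nat).

Definition deg_ge : {set T} := [set v | k <= deg e v].

Lemma kcore_deg_ge v : v \in kcore e k -> k <= deg e v.
Proof.
case/bigcupP=> S /forallP/(_ v)/implyP S_mindeg vS.
apply: leq_trans (S_mindeg vS) _; apply: subset_leq_card.
by apply/subsetP => w; rewrite !inE => /andP[].
Qed.

Lemma kcoreE_deg_ge : min_deg_ge e k deg_ge -> kcore e k = deg_ge.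
Proof.
move=> mindeg; apply/setP => v; apply/idP/idP; first by rewrite inE; apply: kcore_deg_ge.
by move=> v_ge; apply/bigcupP; exists deg_ge.
Qed.

Lemma clique_deg (C : {set T}) u :
  {in C &, forall x y, x != y -> e x y} -> u \in C -> #|C :\ u| <= deg e u.
Proof.
move=> clqC uC; apply: subset_leq_card; apply/subsetP => w.
by rewrite !inE => /andP[wu wC]; apply: clqC; rewrite // eq_sym.
Qed.

Lemma min_deg_ge_deg_ge (C : {set T}) :
  {in C &, forall x y, x != y -> e x y} -> k < #|C| ->
  (forall u, u \notin C -> [set w | e u w] \subset C) ->
  min_deg_ge e k deg_ge.
Proof.
move=> clqC k_lt_C nbhC.
have k_le_C u : u \in C -> k <= #|C :\ u|.
  by move=> uC; rewrite (cardsD1 u C) uC add1n in k_lt_C.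
have C_ge w : w \in C -> k <= deg e w.
  by move=> wC; rewrite (leq_trans (k_le_C w wC)) ?clique_deg.
apply/forallP => u; apply/implyP; rewrite inE => u_ge.
have [uC | uNC] := boolP (u \in C).
  apply: leq_trans (k_le_C u uC) _; apply: subset_leq_card; apply/subsetP => w.
  by rewrite !inE => /andP[wu wC]; rewrite C_ge // clqC // eq_sym.
apply: leq_trans u_ge _; apply: subset_leq_card; apply/subsetP => w.
rewrite !inE => euw; rewrite euw andbT C_ge //.
by apply: (subsetP (nbhC u uNC)); rewrite inE.
Qed.

End KCore.

Section Threshold.
Variables (n : nat) (s : seq bool).
Hypothesis size_s : size s = n.

Definition dominating (u : 'I_n.+1) : bool := (0 < u) && nth false s u.-1.

Definition hubs : {set 'I_n.+1} := ord0 |: [set u | dominating u].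

Lemma card_dominating : #|[set u | dominating u]| = count id s.
Proof.
rewrite -sum1dep_card big_mkcond big_ord_recl /= add0n.
have -> : count id s = \sum_(i < size s) nth false s i.
  by elim: (s) => [|b t IH]; rewrite ?big_ord0 // big_ord_recl /= IH.
by rewrite size_s; apply: eq_bigr => i _; rewrite /dominating /=; case: nth.
Qed.

Lemma card_hubs : #|hubs| = (count id s).+1.
Proof. by rewrite cardsU1 card_dominating inE /dominating ltnn. Qed.

Lemma hubs_clique : {in hubs &, forall x y, x != y -> threshold_adj s x y}.
Proof.
have hubP x : x \in hubs -> (x = ord0) \/ dominating x.
  by rewrite !inE => /orP[/eqP|]; [left|right].
move=> x y /hubP[-> | /andP[x0 sx]] /hubP[-> | /andP[y0 sy]] xy;
  rewrite /threshold_adj xy //=.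
- by rewrite max0n.
- by rewrite /maxn; case: ltnP.
Qed.

Lemma threshold_adj_nonhub u : u \notin hubs -> [set w | threshold_adj s u w] \subset hubs.
Proof.
rewrite !inE negb_or => /andP[u0 /negbTE su]; apply/subsetP => w.
rewrite !inE /threshold_adj /dominating => /andP[_]; rewrite /maxn.
case: ltnP => [uw sw | wu]; first by rewrite sw (leq_ltn_trans _ uw) // orbT.
move: u0; rewrite -val_eqE /= -lt0n => u_pos.
by rewrite /dominating u_pos /= in su; rewrite su.
Qed.

End Threshold.

Theorem mainTheorem14 (k n : nat) (s : seq bool) :
  size s = n -> k <= count id s ->
  forall v : 'I_n.+1,
    (v \in kcore (threshold_adj s) k) = (k <= deg (threshold_adj s) v).
Proof.
move=> size_s k_le v.
have k_lt_hubs : k < #|hubs n s| by rewrite card_hubs.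
rewrite kcoreE_deg_ge ?inE //.
exact: min_deg_ge_deg_ge (@hubs_clique n s) k_lt_hubs (@threshold_adj_nonhub n s).
Qed.
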